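(* For every integer $k\ge 1$, let $\mathcal{F}^2(k)=\gcd\{\sum_{i=1}^k F_{n+i}^2 : n \ge 0\}$. Then $$\mathcal{F}^2(k) = \begin{cases} F_k, & \text{if $k$ is even},\\ 2, & \text{if $k \equiv 3 \pmod{6}$},\\ 1, & \text{if $k \equiv 1,5 \pmod{6}$}.\end{cases}$$
   Context: $(F_n)$ is the Fibonacci sequence: $F_0=0$, $F_1=1$, $F_n=F_{n-1}+F_{n-2}$. *)

From mathcomp Require Import all_boot.

Fixpoint fib (n : nat) : nat :=
  match n with
  | 0 => 0
  | S m => match m with
           | 0 => 1
           | S p => fib m + fib p
           end
  end.

Definition fibsq_sum (k n : nat) : nat := \sum_(1 <= i < k.+1) (fib (n + i)) ^ 2.

Definition is_gcd_seq (u : nat -> nat) (g : nat) : Prop :=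
  (forall n, g %| u n) /\ (forall d, (forall n, d %| u n) -> d %| g).

(* Write S_k(n) for the sum F_(n+1)^2 + ... + F_(n+k)^2.  Telescoping the
   identity F_m F_(m+1) = F_(m-1) F_m + F_m^2 gives
   S_k(n) + F_n F_(n+1) = F_(n+k) F_(n+k+1).  Modulo F_k the addition formula
   reduces F_(n+k) and F_(n+k+1) to F_(k-1) F_n and F_(k-1) F_(n+1), and by
   Cassini F_(k-1)^2 = (-1)^k, so S_k(n) = ((-1)^k - 1) F_n F_(n+1) mod F_k:
   F_k divides every S_k(n) when k is even, and every S_k(n) + 2 F_n F_(n+1)
   when k is odd.  Conversely a common divisor d divides S_k(0) = F_k F_(k+1)
   and is coprime to F_(k+1), which divides S_k(1) + 1; hence d divides F_k,
   and for odd k also S_k(1) + 2 - S_k(1) = 2.  Finally F_k is even exactly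
   when 3 divides k. *)

From mathcomp Require Import all_boot zify.

Set Implicit Arguments.
Unset Strict Implicit.

Lemma fib_add m n : fib (m + n).+1 = fib m.+1 * fib n.+1 + fib m * fib n.
Proof.
elim: m n => [|m IH] n; first by rewrite mul1n mul0n addn0.
by rewrite addSnnS IH /=; lia.
Qed.

Lemma cassini j : fib j * fib j.+2 + ~~ odd j = fib j.+1 ^ 2 + odd j.
Proof.
elim: j => [|j IH] //; rewrite [odd _]/=.
have fibS2 : fib j.+2 = fib j.+1 + fib j by [].
have fibS3 : fib j.+3 = fib j.+2 + fib j.+1 by [].
rewrite fibS3 fibS2 in IH *.
by case: (odd j) IH => /= IH; nia.
Qed.

Lemma odd_fib k : odd (fib k) = ~~ (3 %| k).
Proof.
elim/ltn_ind: k => -[|[|[|k]]] IH //.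
have -> : fib k.+3 = fib k + 2 * fib k.+1 by rewrite /=; lia.
rewrite oddD oddM /= addbF -[k.+3]addn3 dvdn_addl // IH //; lia.
Qed.

Lemma fibsq_sum_telescope k n :
  fibsq_sum k n + fib n * fib n.+1 = fib (n + k) * fib (n + k).+1.
Proof.
elim: k => [|k IH]; first by rewrite /fibsq_sum big_geq // addn0.
rewrite /fibsq_sum big_nat_recr //= -/(fibsq_sum k n) addnS.
by move: IH; rewrite /=; nia.
Qed.

Lemma fibsq_sum0 k : fibsq_sum k 0 = fib k * fib k.+1.
Proof. by have := fibsq_sum_telescope k 0; rewrite add0n /= addn0. Qed.

Lemma fibsq_sum1 k : (fibsq_sum k 1).+1 = fib k.+1 * fib k.+2.
Proof. by have := fibsq_sum_telescope k 1; rewrite add1n addn1. Qed.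

Lemma dvdn_fibsq_sum k n :
  fib k %| fibsq_sum k n + odd k * 2 * (fib n * fib n.+1).
Proof.
case: k => [|j]; first by rewrite /fibsq_sum big_geq.
set A := fib j; set B := fib j.+1.
set x := fib n; set y := fib n.+1; set z := fib n.+2.
have fib_nk : fib (n + j.+1) = B * y + A * x by rewrite addnS addnC fib_add.
have fib_nk1 : fib (n + j.+1).+1 = B * z + A * y.
  by rewrite -addSnnS addnC fib_add.
have sum_id := fibsq_sum_telescope j.+1 n.
rewrite fib_nk fib_nk1 in sum_id.
have cas := cassini j; rewrite (_ : fib j.+2 = B + A) // -/A -/B in cas.
(* Expanding F_(n+k) F_(n+k+1) leaves A^2 x y, and Cassini trades A^2 + A B
   for B^2 + 1 (k even) or B^2 - 1 (k odd). *)
have eq_mul : fibsq_sum j.+1 n + odd j.+1 * 2 * (x * y) + A * (x * y) * B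
              = B * (B * y * z + A * y ^ 2 + A * x * z + B * x * y).
  have hz : z = y + x by [].
  by rewrite oddS hz in sum_id *; case: (odd j) cas => /= cas; nia.
rewrite -(dvdn_addl _ (dvdn_mull (A * (x * y)) (dvdnn B))) eq_mul.
exact/dvdn_mulr/dvdnn.
Qed.

Section CommonDivisor.

Variables (k d : nat).
Hypothesis dvd_sum : forall n, d %| fibsq_sum k n.

Lemma common_dvdn_fib : d %| fib k.
Proof.
have cop : coprime d (fib k.+1).
  apply: coprime_dvdl (dvd_sum 1) _; apply: coprime_dvdr (coprimenS _).
  by rewrite fibsq_sum1 dvdn_mulr.
by rewrite -(Gauss_dvdr _ cop) mulnC -fibsq_sum0.
Qed.

Lemma common_dvdn2 : odd k -> d %| 2.
Proof.
move=> odd_k; have := dvdn_trans common_dvdn_fib (dvdn_fibsq_sum k 1).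
by rewrite odd_k /= dvdn_addr.
Qed.

End CommonDivisor.

Theorem theorem5p2 (k : nat) (hk : 1 <= k) :
  is_gcd_seq (fibsq_sum k)
    (if ~~ odd k then fib k
     else if k %% 6 == 3 then 2
     else 1).
Proof.
case: ifP => [even_k | /negbFE odd_k].
  split=> [n | d /common_dvdn_fib //].
  by have := dvdn_fibsq_sum k n; rewrite (negbTE even_k) addn0.
have dvd3 : (3 %| k) = (k %% 6 == 3) by apply/idP/eqP; lia.
case: ifP => [k3 | not_k3].
  split=> [n | d /common_dvdn2 /(_ odd_k) //].
  have fib_even : 2 %| fib k by rewrite dvdn2 odd_fib dvd3 k3.
  have := dvdn_trans fib_even (dvdn_fibsq_sum k n).
  by rewrite odd_k mul1n dvdn_addl // dvdn_mulr.
split=> [n | d dvd_sum]; first exact: dvd1n.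
have fib_odd : coprime 2 (fib k) by rewrite coprime2n odd_fib dvd3 not_k3.
rewrite -(eqP fib_odd) dvdn_gcd.
by rewrite (common_dvdn2 dvd_sum odd_k) (common_dvdn_fib dvd_sum).
Qed.
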